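(* Suppose the designer is accuracy aligned ($A_1\ge A_0$ and $B_1\ge B_0$) and $\phi<1$. Then there exist $L\in(0,1)$ and $U\in(0,1)$, depending only on $(A_1,A_0,B_1,B_0,\phi)$, such that for every type distribution $F$ satisfying the assumptions below with $F(0)<L$ or $F(0)>U$, a null equilibrium exists.
   Context: A unit mass of individuals has costs $\gamma_i\in\mathbb{R}$ of compliance ($\beta_i=1$) distributed according to a continuously differentiable CDF $F$ with log-concave density $f$ of full support on $\mathbb{R}$. A classifier $\delta=(\delta_1,\delta_0)\in[0,1]^2$ assigns $d_i$ with $\Pr[d_i=s_i\mid s_i]=\delta_{s_i}$ where $\Pr[s_i=\beta_i]=\phi\in(\tfrac12,1]$; individuals with $d_i=1$ receive reward $r\in\mathbb{R}$. Let $\rho(\delta)=(\delta_1+\delta_0-1)(2\phi-1)$; $\delta$ is null iff $\rho=0$. Individuals comply iff $\gamma_i\le r\rho$; compliance rate $\pi=F(r\rho)$. Designer payoffs $(A_1,A_0,B_1,B_0)\in\mathbb{R}_+^4$ ($A_1$: complier with $d_i=1$; $A_0$: complier with $d_i=0$; $B_1$: non-complier with $d_i=0$; $B_0$: non-complier with $d_i=1$), expected payoff $EU_D(\delta\mid r)=\pi[\phi(A_1\delta_1+A_0(1-\delta_1))+(1-\phi)(A_0\delta_0+A_1(1-\delta_0))]+(1-\pi)[\phi(B_1\delta_0+B_0(1-\delta_0))+(1-\phi)(B_0\delta_1+B_1(1-\delta_1))]$. Rewards are budget balanced and each individual also gets $t\pi$, $t\ge0$; individual $i$'s payoff from $r$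 given $\delta$ is $U_i(r)=-\gamma_i+r\rho(1-F(r\rho))+tF(r\rho)$ if $\gamma_i\le r\rho$, else $-r\rho F(r\rho)+tF(r\rho)$. The median individual has cost $\gamma_\mu$ with $F(\gamma_\mu)=\tfrac12$. An equilibrium is a pair $(r^*,\delta^* )$ such that $r^*$ maximizes $U_\mu(r)$ given $\delta^*$ and $\delta^*$ maximizes $EU_D(\delta\mid r^* )$ over $[0,1]^2$; a null equilibrium is one with $r^*=0$ and/or $\delta^*$ null. *)

From Stdlib Require Import Reals Lra.
From Coquelicot Require Import Coquelicot.
Open Scope R_scope.

Definition type_dist (F f : R -> R) : Prop :=
  (forall x, is_derive F x (f x)) /\
  (forall x, continuous f x) /\
  (forall x, 0 < f x) /\
  is_lim F m_infty 0 /\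
  is_lim F p_infty 1 /\
  (forall x y l, 0 <= l <= 1 ->
     l * ln (f x) + (1 - l) * ln (f y) <= ln (f (l * x + (1 - l) * y))).

Definition rho (phi d1 d0 : R) : R := (d1 + d0 - 1) * (2 * phi - 1).

Definition null_classifier (phi d1 d0 : R) : Prop := rho phi d1 d0 = 0.

Definition EU_D (A1 A0 B1 B0 phi : R) (F : R -> R) (r d1 d0 : R) : R :=
  let pi := F (r * rho phi d1 d0) in
  pi * (phi * (A1 * d1 + A0 * (1 - d1)) + (1 - phi) * (A0 * d0 + A1 * (1 - d0)))
  + (1 - pi) * (phi * (B1 * d0 + B0 * (1 - d0)) + (1 - phi) * (B0 * d1 + B1 * (1 - d1))).

Definition U_ind (phi t : R) (F : R -> R) (gamma r d1 d0 : R) : R :=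
  let x := r * rho phi d1 d0 in
  if Rle_dec gamma x
  then - gamma + x * (1 - F x) + t * F x
  else - x * F x + t * F x.

(* (r, (d1,d0)) is an equilibrium, gmu being the median cost (F gmu = 1/2). *)
Definition is_equilibrium (A1 A0 B1 B0 phi t : R) (F : R -> R) (gmu : R)
  (r d1 d0 : R) : Prop :=
  0 <= d1 <= 1 /\ 0 <= d0 <= 1 /\
  (forall r', U_ind phi t F gmu r' d1 d0 <= U_ind phi t F gmu r d1 d0) /\
  (forall e1 e0, 0 <= e1 <= 1 -> 0 <= e0 <= 1 ->
     EU_D A1 A0 B1 B0 phi F r e1 e0 <= EU_D A1 A0 B1 B0 phi F r d1 d0).

Definition is_null_equilibrium (A1 A0 B1 B0 phi t : R) (F : R -> R) (gmu : R)
  (r d1 d0 : R) : Prop :=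
  is_equilibrium A1 A0 B1 B0 phi t F gmu r d1 d0 /\
  (r = 0 \/ null_classifier phi d1 d0).

From Stdlib Require Import Reals Lra.
From Coquelicot Require Import Coquelicot.
Open Scope R_scope.

(* At the reward r = 0 the compliance rate is F 0 whatever the classifier, so
   the designer's payoff is affine in (delta_1, delta_0) with slopes
   [payoff_slope1] and [payoff_slope0]. Accuracy alignment and phi > 1/2 make
   their sum nonnegative, so unless both are positive some classifier on the
   null line delta_1 + delta_0 = 1 is optimal; under a null classifier the
   median individual is indifferent to the reward, and (0, delta) is a null
   equilibrium. Both slopes are positive exactly when F 0 lies strictly
   between two thresholds that depend only on the payoffs and phi. *)

Lemma CDF_bounds (F f : R -> R) (x : R) : type_dist F f -> 0 <= F x <= 1.
Proof.
  intros [HF' [_ [Hf [Hm [Hp _]]]]].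
  assert (Hincr : forall u v, u < v -> F u <= F v).
  { intros u v Huv; left.
    apply (incr_function F m_infty p_infty f); simpl; auto.
    intros; apply Hf. }
  split.
  - apply (is_lim_le_loc F (fun _ => F x) m_infty 0 (F x)); auto.
    + exists x; intros y Hy; apply Hincr; exact Hy.
    + apply is_lim_const.
  - apply (is_lim_le_loc (fun _ => F x) F p_infty (F x) 1); auto.
    + exists x; intros y Hy; apply Hincr; exact Hy.
    + apply is_lim_const.
Qed.

Definition payoff_slope1 (phi a b p : R) : R :=
  p * phi * a - (1 - p) * (1 - phi) * b.

Definition payoff_slope0 (phi a b p : R) : R :=
  (1 - p) * phi * b - p * (1 - phi) * a.

Lemma EU_D_zero_reward_sub (A1 A0 B1 B0 phi : R) (F : R -> R) (e1 e0 d1 d0 : R) :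
  EU_D A1 A0 B1 B0 phi F 0 e1 e0 - EU_D A1 A0 B1 B0 phi F 0 d1 d0 =
  payoff_slope1 phi (A1 - A0) (B1 - B0) (F 0) * (e1 - d1) +
  payoff_slope0 phi (A1 - A0) (B1 - B0) (F 0) * (e0 - d0).
Proof. unfold EU_D, payoff_slope1, payoff_slope0; rewrite !Rmult_0_l; ring. Qed.

Lemma payoff_slope_sum_ge0 (phi a b p : R) :
  1 / 2 < phi -> 0 <= a -> 0 <= b -> 0 <= p <= 1 ->
  0 <= payoff_slope1 phi a b p + payoff_slope0 phi a b p.
Proof.
  intros Hphi Ha Hb Hp.
  replace (payoff_slope1 phi a b p + payoff_slope0 phi a b p)
    with ((2 * phi - 1) * (p * a + (1 - p) * b))
    by (unfold payoff_slope1, payoff_slope0; ring).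
  apply Rmult_le_pos; nra.
Qed.

Lemma affine_max_on_null_line (c1 c0 : R) :
  0 <= c1 + c0 -> ~ (0 < c1 /\ 0 < c0) ->
  exists d1 d0, 0 <= d1 <= 1 /\ 0 <= d0 <= 1 /\ d1 + d0 = 1 /\
    forall e1 e0, 0 <= e1 <= 1 -> 0 <= e0 <= 1 ->
      c1 * (e1 - d1) + c0 * (e0 - d0) <= 0.
Proof.
  intros Hsum Hnot.
  destruct (Rle_dec c0 0) as [Hc0 | Hc0].
  - exists 1, 0; repeat split; try lra.
    intros e1 e0 He1 He0; nra.
  - assert (Hc1 : c1 <= 0) by (destruct (Rle_dec c1 0); [easy | exfalso; lra]).
    exists 0, 1; repeat split; try lra.
    intros e1 e0 He1 He0; nra.
Qed.

Lemma rho_null_line (phi d1 d0 : R) : d1 + d0 = 1 -> rho phi d1 d0 = 0.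
Proof. intros Hd; unfold rho; replace (d1 + d0 - 1) with 0 by lra; ring. Qed.

Lemma U_ind_null_classifier (phi t : R) (F : R -> R) (gamma r d1 d0 : R) :
  rho phi d1 d0 = 0 -> U_ind phi t F gamma r d1 d0 = U_ind phi t F gamma 0 d1 d0.
Proof. intros Hrho; unfold U_ind; rewrite Hrho, !Rmult_0_r; reflexivity. Qed.

Lemma null_equilibrium_zero_reward (A1 A0 B1 B0 phi t : R) (F : R -> R) (gmu : R) :
  A0 <= A1 -> B0 <= B1 -> 1 / 2 < phi -> 0 <= F 0 <= 1 ->
  ~ (0 < payoff_slope1 phi (A1 - A0) (B1 - B0) (F 0) /\
     0 < payoff_slope0 phi (A1 - A0) (B1 - B0) (F 0)) ->
  exists d1 d0, is_null_equilibrium A1 A0 B1 B0 phi t F gmu 0 d1 d0.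
Proof.
  intros HA HB Hphi HF0 Hnot.
  assert (Hsum := payoff_slope_sum_ge0 phi (A1 - A0) (B1 - B0) (F 0) Hphi
                    ltac:(lra) ltac:(lra) HF0).
  destruct (affine_max_on_null_line _ _ Hsum Hnot)
    as [d1 [d0 [Hd1 [Hd0 [Hline Hbest]]]]].
  assert (Hrho := rho_null_line phi d1 d0 Hline).
  exists d1, d0; split; [| right; exact Hrho].
  split; [exact Hd1 | split; [exact Hd0 | split]].
  - intros r; rewrite (U_ind_null_classifier _ _ _ _ r _ _ Hrho); lra.
  - intros e1 e0 He1 He0.
    assert (Hsub := EU_D_zero_reward_sub A1 A0 B1 B0 phi F e1 e0 d1 d0).
    specialize (Hbest e1 e0 He1 He0); lra.
Qed.

Lemma share_in_unit_interval (x y : R) : 0 < x -> 0 < y -> 0 < x / (x + y) < 1.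
Proof.
  intros Hx Hy; split.
  - apply Rdiv_lt_0_compat; lra.
  - apply Rlt_div_l; lra.
Qed.

Lemma payoff_slopes_pos_thresholds (phi a b : R) :
  1 / 2 < phi -> phi < 1 -> 0 <= a -> 0 <= b ->
  exists L U, 0 < L < 1 /\ 0 < U < 1 /\
    forall p, 0 <= p <= 1 ->
      0 < payoff_slope1 phi a b p -> 0 < payoff_slope0 phi a b p -> L <= p <= U.
Proof.
  intros Hphi Hphi1 Ha Hb; unfold payoff_slope1, payoff_slope0.
  destruct (Rlt_dec 0 a) as [Ha' | Ha']; [destruct (Rlt_dec 0 b) as [Hb' | Hb'] |].
  - exists ((1 - phi) * b / ((1 - phi) * b + phi * a)),
           (phi * b / (phi * b + (1 - phi) * a)).
    split; [| split]; try (apply share_in_unit_interval; nra).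
    intros p Hp Hs1 Hs0; split; left.
    + apply Rlt_div_l; nra.
    + apply Rlt_div_r; nra.
  - exists (1 / 2), (1 / 2); split; [lra | split; [lra |]].
    intros p Hp Hs1 Hs0; replace b with 0 in Hs0 by lra.
    assert (0 <= p * (1 - phi) * a) by (apply Rmult_le_pos; nra); lra.
  - exists (1 / 2), (1 / 2); split; [lra | split; [lra |]].
    intros p Hp Hs1 Hs0; replace a with 0 in Hs1 by lra.
    assert (0 <= (1 - p) * (1 - phi) * b) by (apply Rmult_le_pos; nra); lra.
Qed.

Theorem corollary4 (A1 A0 B1 B0 phi : R) :
  0 <= A1 -> 0 <= A0 -> 0 <= B1 -> 0 <= B0 ->
  A0 <= A1 -> B0 <= B1 ->
  1 / 2 < phi -> phi < 1 ->
  exists L Ub : R, 0 < L < 1 /\ 0 < Ub < 1 /\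
    forall (t : R) (F f : R -> R), 0 <= t -> type_dist F f ->
      (F 0 < L \/ Ub < F 0) ->
      forall gmu : R, F gmu = 1 / 2 ->
        exists r d1 d0 : R, is_null_equilibrium A1 A0 B1 B0 phi t F gmu r d1 d0.
Proof.
  intros _ _ _ _ HA HB Hphi Hphi1.
  destruct (payoff_slopes_pos_thresholds phi (A1 - A0) (B1 - B0) Hphi Hphi1
              ltac:(lra) ltac:(lra)) as [L [U [HL [HU Hbetween]]]].
  exists L, U; split; [exact HL | split; [exact HU |]].
  intros t F f _ HFf Hout gmu _.
  assert (HF0 := CDF_bounds F f 0 HFf).
  exists 0; apply null_equilibrium_zero_reward; try lra.
  intros [Hs1 Hs0]; specialize (Hbetween (F 0) HF0 Hs1 Hs0); lra.
Qed.
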